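(* Let $n\geqslant 1$ and let $m_1,\ldots,m_n$ be nonnegative integers. Then, as rational functions of $x$, $$\|x_j^{m_i}\|^*_{1\leqslant i,j\leqslant n}(x-n+1,x-n+2,\ldots,x)=\prod_{1\leqslant i<j\leqslant n}(m_j-m_i)\times\prod_{i=1}^n\frac{(x)_{m_i}}{(x)_{i-1}},$$ where the left side means the polynomial $Q^*$ for $Q(x_1,\ldots,x_n)=\|x_j^{m_i}\|_{1\leqslant i,j\leqslant n}$ evaluated at $x_i=x-n+i$ for $i=1,\ldots,n$.
   Context: $(x)_0=1$ and $(x)_r=x(x-1)\cdots(x-r+1)$ for positive integers $r$. For a polynomial $Q=\sum_{j_1,\ldots,j_n} c_{j_1,\ldots,j_n}x_1^{j_1}\cdots x_n^{j_n}\in\mathbb{C}[x_1,\ldots,x_n]$, $Q^*$ denotes $\sum_{j_1,\ldots,j_n} c_{j_1,\ldots,j_n}(x_1)_{j_1}\cdots(x_n)_{j_n}$. $\|b_{ij}\|_{1\leqslant i,j\leqslant n}$ denotes the determinant of the matrix $(b_{ij})$. *)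

From HB Require Import structures.
From mathcomp Require Import all_boot all_order all_algebra all_field.
From mathcomp Require Import mpoly.
Set Implicit Arguments. Unset Strict Implicit. Unset Printing Implicit Defensive.
Import Order.TTheory GRing.Theory Num.Theory.
Local Open Scope ring_scope.

Definition ffact (R : pzRingType) (p : R) (k : nat) : R :=
  \prod_(r < k) (p - r%:R).

Definition star (R : comNzRingType) (n : nat) (Q : {mpoly R[n]}) : {mpoly R[n]} :=
  \sum_(m <- msupp Q) Q@_m *: \prod_(i < n) ffact ('X_i) (m i).

Definition powmx (n : nat) (m : 'I_n -> nat) : 'M[{mpoly algC[n]}]_n :=
  \matrix_(i < n, j < n) ('X_j ^+ m i).

Definition evalpoly (n : nat) (P : {mpoly algC[n]}) (v : 'I_n -> {poly algC}) : {poly algC} :=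
  mmap (@polyC algC) v P.

Notation "x %:F" := (@FracField.tofrac _ x) : ring_scope.

From HB Require Import structures.
From mathcomp Require Import all_boot all_order all_algebra all_field.
From mathcomp Require Import mpoly ssrcomplements.
From mathcomp Require Import fingroup perm zify.
Import Order.TTheory GRing.Theory Num.Theory.
Local Open Scope ring_scope.

(* Since Q |-> Q^* is linear and sends x^a to (x)_a, applying it to the
   alternant det (x_j^(m_i)) replaces every power by a falling factorial,
   giving det ((x_j)_(m_i)).  At x_j = x - (n - j), the exchange identity
   (x - k)_m (x)_k = (x)_m (x - m)_k factors this matrix as
   diag ((x)_(m_i)) * ((x - m_i)_(n - j)) * diag (1 / (x)_(n - j)).  Up to
   reversing rows and columns, the middle matrix is a Vandermonde matrix written
   in the falling-factorial basis, which is unitriangular over the monomial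
   basis, so its determinant is the Vandermonde product of the m_i. *)


Section Star.
Context {R : comNzRingType} {n : nat}.

Definition ffact_monom (m : 'X_{1..n}) : {mpoly R[n]} :=
  \prod_(i < n) ffact 'X_i (m i).

Lemma starE (p : {mpoly R[n]}) k : (msize p <= k)%N ->
  star p = \sum_(m : 'X_{1..n < k}) p@_m *: ffact_monom m.
Proof.
move=> le_pk; set I : subFinType _ := 'X_{1..n < k}.
rewrite /star (big_mksub I) ?msupp_uniq //=; last first.
  by move=> m /msize_mdeg_lt /leq_trans; apply.
by rewrite big_rmcond //= => m /memN_msupp_eq0 ->; rewrite scale0r.
Qed.

Lemma star_is_additive : additive (@star R n).
Proof.
move=> p q; pose k := (msize p + msize q + msize (p - q))%N.
rewrite !(@starE _ k) /k; try lia.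
by rewrite -sumrB; apply: eq_bigr => m _; rewrite mcoeffB scalerBl.
Qed.

HB.instance Definition _ :=
  GRing.isAdditive.Build {mpoly R[n]} {mpoly R[n]} (@star R n) star_is_additive.

Lemma starX (m : 'X_{1..n}) : star 'X_[m] = ffact_monom m.
Proof. by rewrite /star msuppX big_seq1 mcoeffX eqxx scale1r. Qed.

Lemma star_det_powmx (m : 'I_n -> nat) :
  star (\det (\matrix_(i, j) 'X_j ^+ m i : 'M[{mpoly R[n]}]_n))
  = \det (\matrix_(i, j) ffact ('X_j : {mpoly R[n]}) (m i)).
Proof.
rewrite raddf_sum; apply: eq_bigr => s _.
pose ms := [multinom m ((s^-1)%g j) | j < n].
have -> : \prod_i (\matrix_(i, j) 'X_j ^+ m i : 'M[{mpoly R[n]}]_n) i (s i)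
          = 'X_[ms].
  by rewrite (@mpolyXE n R s); apply: eq_bigr => i _; rewrite !mxE mnmE permK.
have -> : \prod_i (\matrix_(i, j) ffact ('X_j : {mpoly R[n]}) (m i)) i (s i)
          = ffact_monom ms.
  rewrite /ffact_monom [RHS](reindex_inj (@perm_inj _ s)).
  by apply: eq_bigr => i _; rewrite !mxE mnmE permK.
by case: (odd_perm s); rewrite ?expr1 ?expr0 ?mulN1r ?mul1r ?raddfN /= starX.
Qed.

End Star.

Lemma rmorph_ffact {R S : pzRingType} (f : {rmorphism R -> S}) (p : R) k :
  f (ffact p k) = ffact (f p) k.
Proof.
by rewrite rmorph_prod; apply: eq_bigr => r _; rewrite rmorphB rmorph_nat.
Qed.

Section FallingFactorial.
Context {R : comNzRingType}.

Lemma ffactD (p : R) a b : ffact p (a + b) = ffact p a * ffact (p - a%:R) b.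
Proof.
rewrite /ffact big_split_ord /=; congr (_ * _); apply: eq_bigr => i _.
by rewrite natrD opprD addrA.
Qed.

Lemma ffact_exchange (p : R) a b :
  ffact p a * ffact (p - a%:R) b = ffact p b * ffact (p - b%:R) a.
Proof. by rewrite -!ffactD addnC. Qed.

Lemma ffactXE k :
  ffact ('X : {poly R}) k = \prod_(r <- index_iota 0 k) ('X - r%:R%:P).
Proof.
rewrite /ffact -(big_mkord xpredT (fun r => 'X - r%:R)).
by apply: eq_bigr => r _; rewrite polyC_natr.
Qed.

Lemma size_ffactX k : size (ffact ('X : {poly R}) k) = k.+1.
Proof. by rewrite ffactXE size_prod_XsubC size_iota subn0. Qed.

Lemma lead_coef_ffactX k : lead_coef (ffact ('X : {poly R}) k) = 1.
Proof. by rewrite ffactXE lead_coef_prod_XsubC. Qed.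

Lemma horner_ffactX k (a : R) : (ffact 'X k).[a] = ffact a k.
Proof. by rewrite -horner_evalE rmorph_ffact /= horner_evalE hornerX. Qed.

Lemma det_ffact_Vandermonde {n} (a : 'I_n -> R) :
  \det (\matrix_(i, j) ffact (a i) j)
  = \prod_(i < n) \prod_(j < n | (i < j)%N) (a j - a i).
Proof.
pose C : 'M[R]_n := \matrix_(l, j) (ffact 'X j)`_l.
have -> : \matrix_(i, j) ffact (a i) j = (Vandermonde n (\row_i a i))^T *m C.
  apply/matrixP => i j; rewrite !mxE -horner_ffactX (@horner_coef_wide _ n).
    by apply: eq_bigr => l _; rewrite !mxE mulrC.
  by rewrite size_ffactX.
have unitriangular_C : \det C = 1.
  rewrite -det_tr det_trig.
    rewrite big1 // => i _.
    by rewrite !mxE -(lead_coef_ffactX i) lead_coefE size_ffactX.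
  by apply/is_trig_mxP => i j lt_ij; rewrite !mxE nth_default ?size_ffactX.
rewrite det_mulmx unitriangular_C mulr1 det_tr det_Vandermonde.
by apply: eq_bigr => i _; apply: eq_bigr => j _; rewrite !mxE.
Qed.

End FallingFactorial.

Lemma det_mxsub_perm {R : comNzRingType} {n} (s : 'S_n) (A : 'M[R]_n) :
  \det (mxsub s s A) = \det A.
Proof.
have -> : mxsub s s A = row_perm s (col_perm s A).
  by apply/matrixP => i j; rewrite !mxE.
rewrite row_permE col_permE !det_mulmx !det_perm odd_permV.
by rewrite mulrA mulrC mulrA -expr2 sqrr_sign mul1r.
Qed.

Lemma big_ltn_rev_ord {R : Type} {idx : R} (op : Monoid.com_law idx) {n}
    (F : 'I_n -> 'I_n -> R) :
  \big[op/idx]_(i < n) \big[op/idx]_(j < n | (i < j)%N) F (rev_ord i) (rev_ord j)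
  = \big[op/idx]_(i < n) \big[op/idx]_(j < n | (i < j)%N) F j i.
Proof.
rewrite !pair_big_dep /=.
pose swap_rev (p : 'I_n * 'I_n) := (rev_ord p.2, rev_ord p.1).
have swap_revK : involutive swap_rev.
  by move=> [a b]; rewrite /swap_rev /= !rev_ordK.
rewrite [RHS](reindex_inj (inv_inj swap_revK)) /=; apply: eq_big => -[a b] //=.
by have := ltn_ord a; have := ltn_ord b; lia.
Qed.

Lemma det_ffact_shift (K : fieldType) (x : K)
    (x_notin_nat : forall r : nat, x != r%:R) n (m : 'I_n -> nat) :
  \det (\matrix_(i, j) ffact (x - (n - j.+1)%:R) (m i))
  = (\prod_(i < n) \prod_(j < n | (i < j)%N) ((m j)%:R - (m i)%:R))
    * \prod_(i < n) (ffact x (m i) / ffact x i).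
Proof.
have ffact_neq0 k : ffact x k != 0.
  by apply/prodf_neq0 => r _; rewrite subr_eq0.
pose N : 'M[K]_n := \matrix_(i, j) ffact (x - (m i)%:R) (n - j.+1).
have -> : \matrix_(i, j) ffact (x - (n - j.+1)%:R) (m i)
    = diag_mx (\row_i ffact x (m i)) *m N
      *m diag_mx (\row_j (ffact x (n - j.+1))^-1).
  apply/matrixP => i j; rewrite mul_mx_diag mul_diag_mx !mxE.
  apply: (mulfI (ffact_neq0 (n - j.+1)%N)).
  by rewrite ffact_exchange mulrCA mulrA mulfK.
have detN : \det N = \prod_(i < n) \prod_(j < n | (i < j)%N) ((m j)%:R - (m i)%:R).
  rewrite -(det_mxsub_perm (perm (@rev_ord_inj n)) N).
  have -> : mxsub (perm (@rev_ord_inj n)) (perm (@rev_ord_inj n)) N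
      = \matrix_(i, j) ffact (x - (m (rev_ord i))%:R) j.
    apply/matrixP => i j; rewrite !mxE !permE /=; congr ffact.
    by have := ltn_ord j; lia.
  rewrite (det_ffact_Vandermonde (fun i => x - (m (rev_ord i))%:R)).
  rewrite -(big_ltn_rev_ord _ (fun i j => (m i)%:R - (m j)%:R)).
  by apply: eq_bigr => i _; apply: eq_bigr => j _; rewrite opprB addrC subrKA.
rewrite !det_mulmx detN !det_diag big_split /=.
rewrite [\prod_(i < n) (ffact x i)^-1](reindex_inj rev_ord_inj).
rewrite -[LHS]mulrA [LHS]mulrCA.
by congr (_ * (_ * _)); apply: eq_bigr => i _; rewrite mxE.
Qed.

Lemma mmap_ffactX {R : nzRingType} {S : comNzRingType} {n}
    (f : {rmorphism R -> S}) (h : 'I_n -> S) j k :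
  mmap f h (ffact 'X_j k) = ffact (h j) k.
Proof. by rewrite rmorph_ffact /= -[h j](mmap1U h j) -(mmapX _ f). Qed.

Theorem corollary2p1 (n : nat) (hn : (1 <= n)%N) (m : 'I_n -> nat) :
  (evalpoly (star (\det (powmx m))) (fun i : 'I_n => 'X + (i.+1)%:R - n%:R))%:F
  = ((\prod_(i < n) \prod_(j < n | (i < j)%N) ((m j)%:R - (m i)%:R)) : {poly algC})%:F
    * \prod_(i < n) ((ffact ('X : {poly algC}) (m i))%:F / (ffact ('X : {poly algC}) i)%:F).
Proof.
set x : {fraction {poly algC}} := ('X)%:F.
have x_notin_nat (r : nat) : x != r%:R.
  rewrite /x -(rmorph_nat (@tofrac _)) tofrac_eq -polyC_natr.
  by rewrite -subr_eq0 -size_poly_eq0 size_XsubC.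
rewrite /powmx star_det_powmx /evalpoly -!det_map_mx.
have -> : map_mx (@tofrac _)
      (map_mx (mmap polyC (fun i : 'I_n => 'X + (i.+1)%:R - n%:R))
         (\matrix_(i, j) ffact ('X_j : {mpoly algC[n]}) (m i)))
    = \matrix_(i, j) ffact (x - (n - j.+1)%:R) (m i).
  apply/matrixP => i j; rewrite !mxE mmap_ffactX rmorph_ffact.
  by rewrite rmorphB rmorphD !rmorph_nat natrB // opprB addrA.
rewrite det_ffact_shift // rmorph_prod.
congr (_ * _); apply: eq_bigr => i _; rewrite ?rmorph_ffact //.
by rewrite rmorph_prod; apply: eq_bigr => j _; rewrite rmorphB !rmorph_nat.
Qed.
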